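(* Consider the generalized linear model described in the context with $m=p\geq 2$ distinct design points $\mathbf{x}_1,\ldots,\mathbf{x}_m$, model matrix $\mathbf{X}\in\mathbb{R}^{m\times p}$ with $\mathrm{rank}(\mathbf{X})=p$, and $\nu_i>0$ for each $i=1,\ldots,m$. Then an allocation $\mathbf{w}_*=(w_1^*,\ldots,w_m^* )^T\in S_m$ is A-optimal if and only if \[ w_i^*=\frac{\sqrt{c_i/\nu_i}}{\sum_{j=1}^m\sqrt{c_j/\nu_j}},\qquad i=1,\ldots,m, \] where $c_i>0$ is the $i$th diagonal element of $(\mathbf{X}\mathbf{X}^T)^{-1}$.
   Context: Generalized linear model (GLM): independent responses $Y_i$ from a one-parameter exponential family with $E(Y_i)=\mu_i$ and $\eta_i=g(\mu_i)=\mathbf{X}_i^T\boldsymbol\beta$, where $g$ is the link function, $\mathbf{X}_i=\mathbf{q}(\mathbf{x}_i)=(q_1(\mathbf{x}_i),\ldots,q_p(\mathbf{x}_i))^T$ for given predictor functions $q_1,\ldots,q_p$ and covariate vectors $\mathbf{x}_i\in\mathbb{R}^d$, and $\boldsymbol\beta\in\mathbb{R}^p$ is a fixed (assumed) parameter vector. Let $\nu_i=(\partial\mu_i/\partial\eta_i)^2/\mathrm{Var}(Y_i)\ge 0$. Given distinct design points $\mathbf{x}_1,\ldots,\mathbf{x}_m$, the model matrix is $\mathbf{X}=(\mathbf{q}(\mathbf{x}_1),\ldots,\mathbf{q}(\mathbf{x}_m))^T\in\mathbb{R}^{m\times p}$. Let $S_m=\{\mathbf{w}=(w_1,\ldots,w_m)^T\in\mathbb{R}^m: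 w_i\ge 0,\ \sum_i w_i=1\}$, $\mathbf{W}=\mathrm{diag}\{w_1\nu_1,\ldots,w_m\nu_m\}$, $f(\mathbf{w})=|\mathbf{X}^T\mathbf{W}\mathbf{X}|$, and $h(\mathbf{w})=[\mathrm{tr}((\mathbf{X}^T\mathbf{W}\mathbf{X})^{-1})]^{-1}$ if $f(\mathbf{w})>0$, $h(\mathbf{w})=0$ if $f(\mathbf{w})=0$. An allocation $\mathbf{w}\in S_m$ is A-optimal if it maximizes $h$ over $S_m$. *)

From HB Require Import structures.
From mathcomp Require Import all_boot all_order all_algebra.
From mathcomp Require Import reals.
Set Implicit Arguments. Unset Strict Implicit. Unset Printing Implicit Defensive.
Import Order.TTheory GRing.Theory Num.Theory.
Local Open Scope ring_scope.

Section GLM.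
Variable R : realType.

Definition model_matrix (m p d : nat) (q : 'rV[R]_d -> 'rV[R]_p)
  (x : 'I_m -> 'rV[R]_d) : 'M[R]_(m, p) :=
  \matrix_(i < m, j < p) q (x i) 0 j.

Definition in_simplex (m : nat) (w : 'I_m -> R) : Prop :=
  (forall i, 0 <= w i) /\ \sum_(i < m) w i = 1.

Definition info_mx (m p : nat) (X : 'M[R]_(m, p)) (nu w : 'I_m -> R)
  : 'M[R]_p :=
  X^T *m diag_mx (\row_i (w i * nu i)) *m X.

Definition f_det (m p : nat) (X : 'M[R]_(m, p)) (nu w : 'I_m -> R) : R :=
  \det (info_mx X nu w).

Definition h_A (m p : nat) (X : 'M[R]_(m, p)) (nu w : 'I_m -> R) : R :=
  if 0 < f_det X nu w then (\tr (invmx (info_mx X nu w)))^-1 else 0.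

Definition A_optimal (m p : nat) (X : 'M[R]_(m, p)) (nu w : 'I_m -> R)
  : Prop :=
  in_simplex w /\
  forall w' : 'I_m -> R, in_simplex w' -> h_A X nu w' <= h_A X nu w.

End GLM.

From HB Require Import structures.
From mathcomp Require Import all_boot all_order all_algebra.
From mathcomp Require Import reals.
From mathcomp Require Import ring.
Set Implicit Arguments. Unset Strict Implicit. Unset Printing Implicit Defensive.
Import Order.TTheory GRing.Theory Num.Theory.
Local Open Scope ring_scope.

(* For a square invertible X and positive weights, (X^T W X)^-1 = X^-1 W^-1 X^-T
   has trace sum_i c_i / (nu_i w_i), where c_i = ((X X^T)^-1)_ii > 0; if some
   w_i = 0 the information matrix is singular and h vanishes.  A-optimality thus
   means minimizing sum_i a_i / w_i over the simplex, a_i = c_i / nu_i, and when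
   sum_i w_i = 1 the identity
     sum_i a_i / w_i = S^2 + sum_i (sqrt a_i - S w_i)^2 / w_i,  S = sum_i sqrt a_i,
   shows that the minimum S^2 is attained exactly at w_i = sqrt a_i / S. *)

Section ComUnitRingMatrix.
Variable R : comUnitRingType.

Lemma mulmx1_invmx n (A B : 'M[R]_n) : A *m B = 1%:M -> invmx A = B.
Proof.
move=> AB1; have [A_unit _] := mulmx1_unit AB1.
by rewrite -[RHS](mulKmx A_unit) AB1 mulmx1.
Qed.

Lemma invmx_mul n (A B : 'M[R]_n) : A \in unitmx -> B \in unitmx ->
  invmx (A *m B) = invmx B *m invmx A.
Proof.
move=> A_unit B_unit; apply: mulmx1_invmx.
by rewrite mulmxA (mulmxK B_unit) (mulmxV A_unit).
Qed.

Lemma mxtrace_mulmx_diag_tr m n (Y : 'M[R]_(m, n)) (d : 'rV[R]_n) :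
  \tr (Y *m diag_mx d *m Y^T) = \sum_i (Y^T *m Y) i i * d 0 i.
Proof.
rewrite mxtrace_mulC mulmxA /mxtrace.
by apply: eq_bigr => i _; rewrite mul_mx_diag mxE.
Qed.

End ComUnitRingMatrix.

Lemma invmx_diag (F : fieldType) n (d : 'rV[F]_n) : (forall i, d 0 i != 0) ->
  invmx (diag_mx d) = diag_mx (\row_i (d 0 i)^-1).
Proof.
move=> d_neq0; apply: mulmx1_invmx; rewrite mulmx_diag -diag_const_mx.
by congr diag_mx; apply/rowP => i; rewrite !mxE mulfV.
Qed.

Lemma mulmx_tr_diag_gt0 (R : realFieldType) n (M : 'M[R]_n) i :
  M \in unitmx -> 0 < (M^T *m M) i i.
Proof.
(* Column i of M cannot vanish, since (M^-1 M)_ii = 1. *)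
move=> M_unit; have sqr_ge0_col k : 0 <= M^T i k * M k i.
  by rewrite mxE -expr2 sqr_ge0.
rewrite mxE lt_def sumr_ge0 // andbT; apply/eqP.
move/psumr_eq0P => /(_ (fun k _ => sqr_ge0_col k)) col_eq0.
have col_i_eq0 k : M k i = 0.
  by have /eqP := col_eq0 k isT; rewrite mxE -expr2 sqrf_eq0 => /eqP.
have /matrixP/(_ i i) := mulVmx M_unit; rewrite !mxE eqxx big1 => [|k _].
  by move/eqP; rewrite eq_sym oner_eq0.
by rewrite col_i_eq0 mulr0.
Qed.

Section InformationMatrix.
Variables (R : realType) (n : nat) (X : 'M[R]_n) (nu : 'I_n -> R).

Lemma det_info_mx (w : 'I_n -> R) :
  \det (info_mx X nu w) = \det X ^+ 2 * \prod_i (w i * nu i).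
Proof.
rewrite /info_mx !det_mulmx det_tr det_diag.
by under eq_bigr do rewrite mxE; rewrite expr2 mulrAC.
Qed.

Lemma h_A_eq0 (w : 'I_n -> R) i : w i = 0 -> h_A X nu w = 0.
Proof.
by move=> wi0; rewrite /h_A /f_det det_info_mx (bigD1 i) //= wi0 !(mul0r, mulr0) ltxx.
Qed.

Hypothesis X_unit : X \in unitmx.

Lemma invmx_mulmx_tr : invmx (X *m X^T) = (invmx X)^T *m invmx X.
Proof. by rewrite invmx_mul ?unitmx_tr // trmx_inv. Qed.

Hypothesis nu_gt0 : forall i, 0 < nu i.

Lemma invmx_info_mx (w : 'I_n -> R) : (forall i, 0 < w i) ->
  invmx (info_mx X nu w) = invmx X *m diag_mx (\row_i (w i * nu i)^-1) *m (invmx X)^T.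
Proof.
move=> w_gt0; have wnu_neq0 i : (\row_i (w i * nu i)) 0 i != 0.
  by rewrite mxE mulf_neq0 // lt0r_neq0.
have D_unit : diag_mx (\row_i (w i * nu i)) \in unitmx.
  by rewrite unitmxE det_diag unitfE; apply/prodf_neq0 => i _.
rewrite /info_mx !invmx_mul ?unitmx_mul ?unitmx_tr ?X_unit ?D_unit //.
rewrite invmx_diag // trmx_inv mulmxA; congr (_ *m _ *m _).
by congr diag_mx; apply/rowP => i; rewrite !mxE.
Qed.

Lemma h_A_gt0 (w : 'I_n -> R) : (forall i, 0 < w i) ->
  h_A X nu w = (\sum_i (invmx (X *m X^T)) i i / nu i / w i)^-1.
Proof.
move=> w_gt0; have detX2_gt0 : 0 < \det X ^+ 2.
  by rewrite exprn_even_gt0 // -unitfE -unitmxE.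
have f_det_gt0 : 0 < f_det X nu w.
  by rewrite /f_det det_info_mx mulr_gt0 // prodr_gt0 // => i _; apply: mulr_gt0.
rewrite /h_A f_det_gt0 invmx_info_mx // mxtrace_mulmx_diag_tr -invmx_mulmx_tr //.
congr _^-1; apply: eq_bigr => i _; rewrite mxE invfM.
by rewrite mulrA mulrAC.
Qed.

End InformationMatrix.

Section SimplexHarmonicMinimum.
Variables (R : rcfType) (n : nat) (a : 'I_n -> R).
Hypothesis a_gt0 : forall i, 0 < a i.

Local Notation S := (\sum_(i < n) Num.sqrt (a i)).

Lemma sum_sqrt_gt0 (i : 'I_n) : 0 < S.
Proof.
rewrite (bigD1 i) //= ltr_pwDl ?sqrtr_gt0 //.
by apply: sumr_ge0 => j _; apply: sqrtr_ge0.
Qed.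

Lemma sum_div_weightsE (w : 'I_n -> R) : (forall i, 0 < w i) -> \sum_i w i = 1 ->
  \sum_i a i / w i = S ^+ 2 + \sum_i (Num.sqrt (a i) - S * w i) ^+ 2 / w i.
Proof.
move=> w_gt0 w_sum1.
have termE i : a i / w i = (Num.sqrt (a i) - S * w i) ^+ 2 / w i
                           + (2 * S * Num.sqrt (a i) - S ^+ 2 * w i).
  rewrite -{1}[a i](sqr_sqrtr (ltW (a_gt0 i))); field; exact: lt0r_neq0.
rewrite (eq_bigr _ (fun i _ => termE i)) big_split /= sumrB -!mulr_sumr w_sum1.
ring.
Qed.

Lemma sum_div_weights_ge (w : 'I_n -> R) : (forall i, 0 < w i) -> \sum_i w i = 1 ->
  S ^+ 2 <= \sum_i a i / w i.
Proof.
move=> w_gt0 w_sum1; rewrite sum_div_weightsE // lerDl.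
by apply: sumr_ge0 => i _; rewrite divr_ge0 ?sqr_ge0 ?ltW.
Qed.

Lemma sum_div_weights_eq (w : 'I_n -> R) : (forall i, 0 < w i) -> \sum_i w i = 1 ->
  \sum_i a i / w i = S ^+ 2 -> forall i, w i = Num.sqrt (a i) / S.
Proof.
move=> w_gt0 w_sum1; rewrite sum_div_weightsE // -[RHS]addr0 => /addrI.
have term_ge0 j : true -> 0 <= (Num.sqrt (a j) - S * w j) ^+ 2 / w j.
  by move=> _; rewrite divr_ge0 ?sqr_ge0 ?ltW.
move/psumr_eq0P => /(_ term_ge0) term_eq0 i.
have /eqP := term_eq0 i isT.
rewrite mulf_eq0 invr_eq0 (gt_eqF (w_gt0 i)) orbF sqrf_eq0 subr_eq0 => /eqP ->.
by rewrite mulrAC mulfV ?mul1r // gt_eqF // (sum_sqrt_gt0 i).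
Qed.

Lemma sum_div_sqrt_weights : 0 < S -> \sum_i a i / (Num.sqrt (a i) / S) = S ^+ 2.
Proof.
move=> S_gt0; have termE i : a i / (Num.sqrt (a i) / S) = S * Num.sqrt (a i).
  rewrite -{1}[a i](sqr_sqrtr (ltW (a_gt0 i))); field.
  by rewrite !gt_eqF ?sqrtr_gt0.
by rewrite (eq_bigr _ (fun i _ => termE i)) -mulr_sumr expr2.
Qed.

End SimplexHarmonicMinimum.

Section SimplexArgmax.
Variables (R : realType) (n : nat) (a : 'I_n -> R).
Hypothesis a_gt0 : forall i, 0 < a i.

Local Notation S := (\sum_(i < n) Num.sqrt (a i)).

Lemma argmax_inv_sum_div (h : ('I_n -> R) -> R) (w : 'I_n -> R) :
  (forall v, (forall i, 0 < v i) -> h v = (\sum_i a i / v i)^-1) ->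
  (forall v i, v i = 0 -> h v = 0) ->
  in_simplex w ->
  (forall v, in_simplex v -> h v <= h w) <->
  (forall i, w i = Num.sqrt (a i) / S).
Proof.
move=> h_gt0 h_eq0 [w_ge0 w_sum1].
have [i0 _] : exists i, true && (0 < w i).
  by apply: psumr_neq0P => [i _|]; rewrite ?w_ge0 // w_sum1; apply/eqP/oner_neq0.
have S_gt0 := sum_sqrt_gt0 a_gt0 i0; have S2_gt0 : 0 < S ^+ 2 by rewrite exprn_gt0.
pose w_opt i := Num.sqrt (a i) / S.
have w_opt_gt0 i : 0 < w_opt i by rewrite divr_gt0 ?sqrtr_gt0.
have h_w_opt : h w_opt = (S ^+ 2)^-1 by rewrite h_gt0 // sum_div_sqrt_weights.
have h_le v : in_simplex v -> h v <= (S ^+ 2)^-1.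
  case=> v_ge0 v_sum1.
  have [/forallP v_gt0|/forallPn[i v_i_ngt0]] := boolP [forall i, 0 < v i].
    have sum_ge := sum_div_weights_ge a_gt0 v_gt0 v_sum1.
    by rewrite h_gt0 // lef_pV2 ?posrE ?sum_ge ?(lt_le_trans S2_gt0 sum_ge).
  rewrite (h_eq0 v i) ?invr_ge0 ?ltW //.
  by apply/eqP; rewrite eq_le v_ge0 andbT leNgt v_i_ngt0.
split=> [w_max | w_eq].
  have w_opt_simplex : in_simplex w_opt.
    by split=> [i|]; rewrite ?ltW // -mulr_suml mulfV ?gt_eqF.
  have h_w_ge : (S ^+ 2)^-1 <= h w by rewrite -h_w_opt w_max.
  have w_gt0 i : 0 < w i.
    rewrite lt_def w_ge0 andbT; apply/eqP => w_i0.
    by move: h_w_ge; rewrite (h_eq0 w i w_i0) leNgt invr_gt0 S2_gt0.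
  have sum_ge := sum_div_weights_ge a_gt0 w_gt0 w_sum1.
  apply: sum_div_weights_eq => //; apply/le_anti; rewrite sum_ge andbT.
  by rewrite -lef_pV2 ?posrE ?(lt_le_trans S2_gt0 sum_ge) // -h_gt0.
have w_gt0 i : 0 < w i by rewrite w_eq; apply: w_opt_gt0.
have h_w : h w = (S ^+ 2)^-1.
  by rewrite h_gt0 //; under eq_bigr do rewrite w_eq; rewrite sum_div_sqrt_weights.
by move=> v /h_le; rewrite h_w.
Qed.

End SimplexArgmax.

Theorem theorem1 (R : realType) (p d : nat) (q : 'rV[R]_d -> 'rV[R]_p)
  (x : 'I_p -> 'rV[R]_d) (nu : 'I_p -> R) (w : 'I_p -> R) :
  (2 <= p)%N ->
  injective x ->
  \rank (model_matrix q x) = p ->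
  (forall i, 0 < nu i) ->
  in_simplex w ->
  let X := model_matrix q x in
  let c := fun i : 'I_p => (invmx (X *m X^T)) i i in
  A_optimal X nu w <->
  (forall i : 'I_p,
     w i = Num.sqrt (c i / nu i) / \sum_(j < p) Num.sqrt (c j / nu j)).
Proof.
move=> _ _ rankX nu_gt0 w_simplex X c.
have X_unit : X \in unitmx by rewrite -row_free_unit /row_free rankX.
have a_gt0 i : 0 < c i / nu i.
  by rewrite divr_gt0 // /c invmx_mulmx_tr // mulmx_tr_diag_gt0 ?unitmx_inv.
rewrite -(argmax_inv_sum_div a_gt0 (h := h_A X nu)) //.
- by split=> [[]|] //; split.
- by move=> v v_gt0; rewrite h_A_gt0.
- exact: h_A_eq0.
Qed.
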